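(* Let $n,b$ be integers with $1<n<b$, let $d_0\le d_1\le\cdots\le d_k$ be base-$b$ digits, let $\pi,\sigma$ be permutations of $\{0,\ldots,k\}$, and suppose $p=(d_{\pi(k)},\ldots,d_{\pi(0)})_b=n\cdot(d_{\pi\sigma(k)},\ldots,d_{\pi\sigma(0)})_b$ (an $(n,b,\sigma)$-permutiple) has $j$-th carry equal to $n-1$. If $\{d_0,\ldots,d_k\}$ and $\{\overline{d}_0,\ldots,\overline{d}_k\}$ are the same multiset, then the reflective sibling $$\overline{p}_{\psi^j}=(\overline{d}_{\pi\psi^j(k)},\ldots,\overline{d}_{\pi\psi^j(0)})_b=n\cdot(\overline{d}_{\pi\sigma\psi^j(k)},\ldots,\overline{d}_{\pi\sigma\psi^j(0)})_b$$ may also be represented as $$\overline{p}_{\psi^j}=(d_{\rho\pi\psi^j(k)},\ldots,d_{\rho\pi\psi^j(0)})_b=n\cdot(d_{\rho\pi\sigma\psi^j(k)},\ldots,d_{\rho\pi\sigma\psi^j(0)})_b,$$ where $\rho$ is the reversal permutation $\rho(i)=k-i$.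
   Context: For digits $0\le e_i<b$, $(e_k,\ldots,e_0)_b=\sum_i e_ib^i$ (leading zero digits allowed). A number $(e_k,\ldots,e_0)_b$ is an $(n,b,\sigma)$-permutiple if $(e_k,\ldots,e_0)_b=n\cdot(e_{\sigma(k)},\ldots,e_{\sigma(0)})_b$; here $e_i=d_{\pi(i)}$. Its carries are $c_0=0$, $c_{i+1}=\lfloor (n e_{\sigma(i)}+c_i)/b\rfloor$ ($0\le i\le k$); the $j$-th carry is $c_j$. For a digit $d$ write $\overline{d}=b-1-d$. $\psi$ is the $(k+1)$-cycle $(0,1,\ldots,k)$: $\psi(i)=i+1$ for $i<k$, $\psi(k)=0$. For a carry $c_j=n-1$ (necessarily $0<j\le k$), the reflective sibling of $p$ is the number $\overline{p}_{\psi^j}$ displayed in the claim, which is an $(n,b)$-permutiple satisfying the displayed equation. *)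

From mathcomp Require Import all_boot all_fingroup.
Set Implicit Arguments. Unset Strict Implicit. Unset Printing Implicit Defensive.

Definition numval (b k : nat) (e : 'I_k.+1 -> nat) : nat :=
  \sum_(i < k.+1) e i * b ^ i.

Fixpoint carry (n b : nat) (f : nat -> nat) (m : nat) : nat :=
  match m with
  | 0 => 0
  | m'.+1 => (n * f m' + carry n b f m') %/ b
  end.

(* extend a function on 'I_(k+1) to nat (value only used for i <= k) *)
Definition ext (k : nat) (e : 'I_k.+1 -> nat) (i : nat) : nat := e (inord i).

(* psi^j, where psi is the (k+1)-cycle (0 1 ... k): i |-> (i + j) mod (k+1) *)
Definition psi_pow (k : nat) (j : nat) (i : 'I_k.+1) : 'I_k.+1 :=
  Ordinal (ltn_pmod (i + j) (ltn0Sn k)).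

Definition dbar (b d : nat) : nat := b.-1 - d.
Arguments psi_pow k j i : clear implicits.

From mathcomp Require Import all_boot all_fingroup zify.

Set Implicit Arguments.
Unset Strict Implicit.
Unset Printing Implicit Defensive.

(** Writing [c] for the carries of [n * f], the permutiple equation is the
    digitwise chain [e_i + b c_(i+1) = n f_i + c_i] with [c_0 = c_(k+1) = 0].
    Since both ends of the chain vanish, the chain is cyclic and can be
    restarted at any position; restarting at a position [j] with [c_j = n-1]
    and complementing every digit and carry ([d |-> b-1-d], [c |-> n-1-c])
    yields again a chain with vanishing ends, i.e. the reflective sibling.
    Finally, a sorted digit multiset that is closed under complement satisfies
    [b-1-d_i = d_(k-i)], which gives the second representation. *)

Section CarryChain.

Variables n b : nat.

Definition carry_chain (e f c : nat -> nat) (m : nat) : Prop :=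
  forall i, i < m -> e i + b * c i.+1 = n * f i + c i.

Lemma carry_chain_sum e f c m :
  c 0 = 0 -> carry_chain e f c m ->
  \sum_(0 <= i < m) e i * b ^ i + c m * b ^ m = n * \sum_(0 <= i < m) f i * b ^ i.
Proof.
move=> c0; elim: m => [|m IH] chain; first by rewrite !big_geq // c0 muln0.
rewrite !big_nat_recr //= mulnDr -IH => [|i lt_im]; last by apply: chain; lia.
have := congr1 (muln^~ (b ^ m)) (chain m (ltnSn m)).
rewrite expnS !mulnDl; nia.
Qed.

Lemma carry_chain_closed e f c m :
  c 0 = 0 -> c m = 0 -> carry_chain e f c m ->
  \sum_(0 <= i < m) e i * b ^ i = n * \sum_(0 <= i < m) f i * b ^ i.
Proof.
by move=> c0 cm chain; rewrite -(carry_chain_sum c0 chain) cm addn0.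
Qed.

Lemma carry_chain_rot e f c m j :
  c m = c 0 -> carry_chain e f c m ->
  carry_chain (fun i => e ((i + j) %% m)) (fun i => f ((i + j) %% m))
              (fun i => c ((i + j) %% m)) m.
Proof.
move=> cm chain i lt_im; set t := (i + j) %% m.
have lt_tm : t < m by rewrite ltn_pmod // (leq_ltn_trans _ lt_im).
have -> : (i.+1 + j) %% m = t.+1 %% m by rewrite /t addSn -addn1 -modnDml addn1.
have -> : c (t.+1 %% m) = c t.+1.
  case: (ltnP t.+1 m) => [/modn_small -> // | le_mt].
  have eq_tm : t.+1 = m by apply/eqP; rewrite eqn_leq lt_tm.
  by rewrite eq_tm modnn cm.
exact: chain.
Qed.

Lemma carry_chain_dbar e f c m :
  0 < n -> (forall i, e i < b) -> (forall i, f i < b) -> (forall i, c i < n) ->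
  carry_chain e f c m ->
  carry_chain (fun i => dbar b (e i)) (fun i => dbar b (f i))
              (fun i => n.-1 - c i) m.
Proof.
move=> n0 e_lt f_lt c_lt chain i lt_im; rewrite /dbar !mulnBr.
have step := chain i lt_im; have lt_e := e_lt i; have lt_f := f_lt i.
have lt_c := c_lt i; have lt_c' := c_lt i.+1.
have : b * c i.+1 <= b * n.-1 by rewrite leq_mul2l; apply/orP; right; lia.
have : n * f i <= n * b.-1 by rewrite leq_mul2l; apply/orP; right; lia.
have : b * n.-1 + b = n * b.-1 + n by rewrite -!mulnSr !prednK //; lia.
lia.
Qed.

Lemma numeral_inj (e r : nat -> nat) m x y :
  (forall i, e i < b) -> (forall i, r i < b) ->
  \sum_(0 <= i < m) e i * b ^ i + x * b ^ m
    = \sum_(0 <= i < m) r i * b ^ i + y * b ^ m ->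
  (forall i, i < m -> e i = r i) /\ x = y.
Proof.
move=> e_lt r_lt; have b0 : 0 < b by have := e_lt 0; lia.
elim: m x y => [|m IH] x y.
  by rewrite !big_geq // !muln1 !add0n => ->.
rewrite !big_nat_recr //= expnS !mulnA -!addnA -!mulnDl.
case/IH=> eq_low eq_top.
have eq_em : e m = r m.
  have := congr1 (modn^~ b) eq_top.
  by rewrite /= ![_ + _ * b]addnC !modnMDl !modn_small.
split=> [i | ].
  by rewrite ltnS leq_eqVlt => /orP[/eqP -> // | ]; exact: eq_low.
by move: eq_top; rewrite eq_em => /addnI /eqP; rewrite eqn_pmul2r // => /eqP.
Qed.

Lemma carry_ltn f i : 0 < n -> (forall i, f i < b) -> carry n b f i < n.
Proof.
move=> n0 f_lt; elim: i => [|i IH] //=.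
have b0 : 0 < b by have := f_lt 0; lia.
have le_nf : n * f i <= n * b.-1 by rewrite leq_mul2l -ltnS prednK // f_lt orbT.
have : n * b.-1 + n = n * b by rewrite -mulnSr prednK.
rewrite ltn_divLR //; lia.
Qed.

Lemma permutiple_carry_chain e f m :
  (forall i, e i < b) ->
  \sum_(0 <= i < m) e i * b ^ i = n * \sum_(0 <= i < m) f i * b ^ i ->
  carry_chain e f (carry n b f) m /\ carry n b f m = 0.
Proof.
move=> e_lt eq_sum; set c := carry n b f.
have b0 : 0 < b by have := e_lt 0; lia.
pose r i := (n * f i + c i) %% b.
have chain_r : carry_chain r f c m.
  by move=> i _; rewrite [in RHS](divn_eq (n * f i + c i) b) addnC mulnC.
have := carry_chain_sum (erefl : c 0 = 0) chain_r; rewrite -eq_sum.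
rewrite -[in RHS](addn0 (\sum_(_ <= _ < _) _)) -(mul0n (b ^ m)).
case/numeral_inj=> [i | i | r_e cm0]; rewrite ?ltn_mod //.
by split=> // i lt_im; rewrite -r_e //; exact: chain_r.
Qed.

End CarryChain.

Theorem reflective_sibling (n b m : nat) (e f : nat -> nat) (j : nat) :
  0 < n -> (forall i, e i < b) -> (forall i, f i < b) ->
  \sum_(0 <= i < m) e i * b ^ i = n * \sum_(0 <= i < m) f i * b ^ i ->
  j <= m -> carry n b f j = n.-1 ->
  \sum_(0 <= i < m) dbar b (e ((i + j) %% m)) * b ^ i
    = n * \sum_(0 <= i < m) dbar b (f ((i + j) %% m)) * b ^ i.
Proof.
move=> n0 e_lt f_lt eq_sum le_jm cj.
have [chain cm0] := permutiple_carry_chain e_lt eq_sum.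
set c := carry n b f in cj chain cm0 *.
have cj' : c (j %% m) = n.-1.
  case: (ltnP j m) => [/modn_small -> // | le_mj].
  have eq_jm : j = m by lia.
  by rewrite eq_jm modnn -cj eq_jm cm0.
have c_lt i : c i < n by exact: carry_ltn.
have := carry_chain_dbar n0 (fun i => e_lt _) (fun i => f_lt _) (fun i => c_lt _)
          (carry_chain_rot j (cm0 : c m = c 0) chain).
by apply: carry_chain_closed; rewrite ?modnDl cj' subnn.
Qed.

Lemma perm_enum_involutive (T : finType) (f : T -> T) :
  involutive f -> perm_eq [seq f x | x <- enum T] (enum T).
Proof.
move=> fK; apply: uniq_perm => [||x]; rewrite ?(map_inj_uniq (inv_inj fK)) ?enum_uniq //.
by rewrite mem_enum -(fK x) map_f ?mem_enum.
Qed.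

Lemma sorted_map_enum_ord m (g : 'I_m -> nat) :
  {homo g : i1 i2 / (i1 <= i2)%N} -> sorted leq [seq g i | i <- enum 'I_m].
Proof.
move=> g_mono; apply: (@homo_sorted _ _ g (fun i1 i2 => val i1 <= val i2)) => //.
by rewrite -sorted_map val_enum_ord iota_sorted.
Qed.

Lemma dbar_sorted_digits b k (d : 'I_k.+1 -> nat) :
  {homo d : i1 i2 / (i1 <= i2)%N} ->
  perm_eq [seq d i | i <- enum 'I_k.+1] [seq dbar b (d i) | i <- enum 'I_k.+1] ->
  forall x, dbar b (d x) = d (rev_ord x).
Proof.
move=> d_mono d_sym.
have : [seq d i | i <- enum 'I_k.+1] = [seq dbar b (d (rev_ord i)) | i <- enum 'I_k.+1].
  apply: (sorted_eq leq_trans anti_leq); rewrite ?sorted_map_enum_ord //.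
    by move=> i1 i2 le_i; apply: leq_sub2l; apply: d_mono; rewrite /=; lia.
  apply: (perm_trans d_sym); rewrite (map_comp (fun i => dbar b (d i)) (@rev_ord k.+1)) perm_sym.
  by apply: perm_map; apply: perm_enum_involutive; exact: rev_ordK.
move/eq_in_map=> eq_d x.
by rewrite (eq_d (rev_ord x)) ?mem_enum // rev_ordK.
Qed.

Lemma numval_ext b k (e : 'I_k.+1 -> nat) :
  numval b e = \sum_(0 <= i < k.+1) ext e i * b ^ i.
Proof. by rewrite /numval big_mkord; apply: eq_bigr => i _; rewrite /ext inord_val. Qed.

Lemma numval_psi_pow b k j (e : 'I_k.+1 -> nat) :
  numval b (fun i => e (psi_pow k j i))
    = \sum_(0 <= i < k.+1) ext e ((i + j) %% k.+1) * b ^ i.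
Proof.
rewrite /numval big_mkord; apply: eq_bigr => i _; rewrite /ext; congr (e _ * _).
by apply: val_inj; rewrite /= inordK // ltn_pmod.
Qed.

Theorem corollary22 (n b k : nat) (d : 'I_k.+1 -> nat) (pi sigma : 'S_k.+1)
  (j : nat) :
  1 < n -> n < b ->
  (forall i, d i < b) ->
  (forall i1 i2 : 'I_k.+1, i1 <= i2 -> d i1 <= d i2) ->
  (* p is an (n,b,sigma)-permutiple, with e_i = d_{pi(i)} *)
  numval b (fun i => d (pi i)) = n * numval b (fun i => d (pi (sigma i))) ->
  (* the j-th carry equals n-1 *)
  j <= k.+1 ->
  carry n b (ext (fun i => d (pi (sigma i)))) j = n.-1 ->
  (* {d_i} and {dbar_i} are the same multiset *)
  perm_eq [seq d i | i <- enum 'I_k.+1] [seq dbar b (d i) | i <- enum 'I_k.+1] ->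
  numval b (fun i => dbar b (d (pi (psi_pow k j i))))
    = numval b (fun i => d (rev_ord (pi (psi_pow k j i))))
  /\ numval b (fun i => dbar b (d (pi (sigma (psi_pow k j i)))))
    = numval b (fun i => d (rev_ord (pi (sigma (psi_pow k j i)))))
  /\ numval b (fun i => d (rev_ord (pi (psi_pow k j i))))
    = n * numval b (fun i => d (rev_ord (pi (sigma (psi_pow k j i))))).
Proof.
move=> n1 _ d_lt d_mono p_eq le_jk cj d_sym.
have numval_rev (g : 'I_k.+1 -> 'I_k.+1) :
    numval b (fun i => d (rev_ord (g i))) = numval b (fun i => dbar b (d (g i))).
  by apply: eq_bigr => i _; rewrite (dbar_sorted_digits d_mono d_sym).
rewrite !numval_rev; do 2!split=> //.
rewrite (numval_psi_pow _ _ (fun i => dbar b (d (pi i))))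
        (numval_psi_pow _ _ (fun i => dbar b (d (pi (sigma i))))).
rewrite !numval_ext in p_eq.
by apply: (reflective_sibling _ _ _ p_eq le_jk cj) => [|i|i]; rewrite ?d_lt //; lia.
Qed.
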